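(* Let $U\subseteq\mathbb{F}^n$ be an open compact set and $f:U\to\mathbb{F}$ a function such that for all $x_0,x_0+x\in U$, $$f(x_0+x)=f(x_0)+f'(x_0)\cdot x+R(x_0,x)(x)\cdot x,$$ where $f'(x_0)\in\mathbb{F}^n$ and $R(x_0,x):\mathbb{F}^n\to\mathbb{F}^n$ is linear, with $$B:=\sup_{x_0,\,x_0+x\in U,\ |y|=1}|R(x_0,x)(y)\cdot y|<\infty,\qquad \delta:=\min_{x_0\in U}|f'(x_0)|>0.$$ Let $\phi\in\mathcal S(U)$ and let $m_0\in\mathbb Z$ be the smallest integer $m$ such that $U$ is a finite disjoint union of balls $x_k+B_{q^{-m}}$ on each of which $\phi$ is constant. Then $$\int_U\chi(\lambda f(x))\phi(x)\,dx=0\qquad\text{for all }\lambda\in\mathbb{F}^\times\text{ with }|\lambda|>\max\{q\delta^{-2}B,\ \delta^{-1}q^{m_0}\}.$$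
   Context: $\mathbb{F}$ is a non-archimedean local field with ring of integers $\mathfrak o_{\mathbb{F}}$, residue field of cardinality $q$, normalized absolute value $|\cdot|$ (so the uniformizer has absolute value $q^{-1}$); on $\mathbb{F}^n$, $|x|=\max_i|x_i|$ and $x\cdot y=\sum_jx_jy_j$; $B_r=\{x\in\mathbb{F}^n:|x|\le r\}$. $\chi$ is a character of $(\mathbb{F},+)$ with kernel $\mathfrak o_{\mathbb{F}}$; $dx$ is a Haar measure on $\mathbb{F}^n$; $\mathcal S(U)$ is the space of locally constant compactly supported functions on $U$. *)

From HB Require Import structures.
From mathcomp Require Import all_boot all_order all_algebra.
From mathcomp Require Import boolp classical_sets reals.
From mathcomp Require Import complex.
From Stdlib Require Lists.List.
Set Implicit Arguments. Unset Strict Implicit. Unset Printing Implicit Defensive.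
Import Order.TTheory GRing.Theory Num.Theory.
Local Open Scope ring_scope.
Local Open Scope classical_set_scope.

Section LocalField.
Variables (R : realType) (F : fieldType) (absF : F -> R) (q : nat).

(* (F, absF) is a non-archimedean local field whose residue field has q
   elements, and absF is the normalized absolute value (|pi| = q^-1). *)
Definition nonarch_local_field : Prop :=
  (1 < q)%N /\
      (forall x : F, absF x = 0 <-> x = 0) /\
      (forall x y : F, absF (x * y) = absF x * absF y) /\
      (forall x y : F, absF (x + y) <= Num.max (absF x) (absF y)) /\
      (forall x : F, x != 0 -> exists k : int, absF x = (q%:R : R) ^ k) /\
      (exists pi : F, absF pi = (q%:R : R)^-1) /\
      (* residue field o_F / p_F has exactly q elements *)
      (exists reps : 'I_q -> F, (forall i, absF (reps i) <= 1) /\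
         forall x, absF x <= 1 -> exists! i, absF (x - reps i) < 1) /\
      (forall u : nat -> F,
         (forall e : R, 0 < e -> exists N, forall m k, (N <= m)%N -> (N <= k)%N ->
             absF (u m - u k) < e) ->
         exists l, forall e : R, 0 < e -> exists N, forall m, (N <= m)%N ->
             absF (u m - l) < e).

Variable n : nat.
Notation V := 'rV[F]_n.

Definition normv (x : V) : R := \big[Num.max/0]_(i < n) absF (x ord0 i).
Definition dotv (x y : V) : F := \sum_(j < n) x ord0 j * y ord0 j.

Definition openV (O : set V) : Prop :=
  forall x, O x -> exists r : R, 0 < r /\ forall y, normv (y - x) < r -> O y.

Definition compactV (K : set V) : Prop :=
  forall (I : Type) (O : I -> set V), (forall i, openV (O i)) ->
    K `<=` (fun x => exists i, O i x) ->
    exists s : seq I, K `<=` (fun x => exists2 i, Stdlib.Lists.List.In i s & O i x).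

Definition loc_const_on (D : set V) (C : Type) (g : V -> C) : Prop :=
  forall x, D x -> exists r : R, 0 < r /\
    forall y, normv (y - x) < r -> D y /\ g y = g x.

Definition schwartz_on (D : set V) (C : zmodType) (g : V -> C) : Prop :=
  loc_const_on D g /\
  exists K : set V, K `<=` D /\ compactV K /\ forall x, D x -> ~ K x -> g x = 0.

Definition ball_decomp (U : set V) (C : Type) (phi : V -> C) (m : int) : Prop :=
  exists s : seq V,
    (forall x, U x <-> exists2 c, c \in s & normv (x - c) <= (q%:R : R) ^ (- m)) /\
    (forall i j, (i < size s)%N -> (j < size s)%N -> i <> j ->
       forall x, ~ (normv (x - nth 0 s i) <= (q%:R : R) ^ (- m) /\
                    normv (x - nth 0 s j) <= (q%:R : R) ^ (- m))) /\
    (forall c, c \in s -> forall x y,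
       normv (x - c) <= (q%:R : R) ^ (- m) -> normv (y - c) <= (q%:R : R) ^ (- m) ->
       phi x = phi y).

Definition char_ker_oF (chi : F -> R[i]) : Prop :=
  (forall x y, chi (x + y) = chi x * chi y) /\
  (forall x, `|chi x| = 1) /\
  (forall x, chi x = 1 <-> absF x <= 1).

(* I is the integral against a Haar measure dx on F^n, viewed as a
   functional on S(F^n): linear, translation invariant, positive, nonzero. *)
Definition haar_integral (I : (V -> R[i]) -> R[i]) : Prop :=
  [/\ (forall g h (a : R[i]), schwartz_on setT g -> schwartz_on setT h ->
         I (fun x => g x + a * h x) = I g + a * I h),
      (forall g (a : V), schwartz_on setT g -> I (fun x => g (x + a)) = I g),
      (forall g, schwartz_on setT g -> (forall x, 0 <= g x) -> 0 <= I g) &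
      (exists g, schwartz_on setT g /\ I g != 0)].

End LocalField.

From HB Require Import structures.
From mathcomp Require Import all_boot all_order all_algebra.
From mathcomp Require Import boolp classical_sets reals.
From mathcomp Require Import complex.
From mathcomp Require Import ring.
Import Order.TTheory GRing.Theory Num.Theory.
Local Open Scope ring_scope.
Local Open Scope classical_set_scope.

(* Put r := q / (|lam| delta).  Since |lam| delta is a value of the absolute
   value, i.e. a power of q, lying strictly above q^m0, we get r <= q^-m0; so
   every closed r-ball centred in U lies inside a ball of the decomposition:
   it is contained in U and phi is constant on it.  On such a ball around c,
   Taylor's formula writes lam f(x) as lam f(c) + lam f'(c).(x - c) plus a
   remainder of absolute value at most |lam| r^2 B < q, hence at most 1, which
   chi ignores: the integrand is a constant times the additive character
   x |-> chi(lam f'(c).(x - c)).  This character is nontrivial on the ball,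
   since some a with |a| <= r has |lam f'(c).a| = q; translating by a shows
   that the integral over the ball vanishes.  Finally U, being compact, is a
   finite disjoint union of such balls. *)

Set Implicit Arguments. Unset Strict Implicit.

Section ValuedSpace.
Variables (R : realType) (F : fieldType) (absF : F -> R) (q : nat).
Hypothesis hF : nonarch_local_field absF q.

Lemma q_gt1 : 1 < (q%:R : R).
Proof. by case: hF => h _; rewrite ltr1n. Qed.

Lemma q_gt0 : 0 < (q%:R : R).
Proof. exact: lt_trans ltr01 q_gt1. Qed.

Lemma absF0 : absF 0 = 0.
Proof. by case: hF => _ [h _]; apply h. Qed.

Lemma absF_eq0 x : absF x = 0 -> x = 0.
Proof. by case: hF => _ [h _]; apply h. Qed.

Lemma absFM x y : absF (x * y) = absF x * absF y.
Proof. by case: hF => _ [_ [h _]]. Qed.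

Lemma absF_ultra x y : absF (x + y) <= Num.max (absF x) (absF y).
Proof. by case: hF => _ [_ [_ [h _]]]. Qed.

Lemma absF_val x : x != 0 -> exists k : int, absF x = (q%:R : R) ^ k.
Proof. by case: hF => _ [_ [_ [_ [h _]]]]; apply: h. Qed.

Lemma uniformizer : exists pi : F, absF pi = (q%:R : R)^-1.
Proof. by case: hF => _ [_ [_ [_ [_ [h _]]]]]. Qed.

Lemma absF_ge0 x : 0 <= absF x.
Proof.
have [->|nz] := eqVneq x 0; first by rewrite absF0.
have [k ->] := absF_val nz; exact/ltW/exprz_gt0/q_gt0.
Qed.

Lemma absF_gt0 x : x != 0 -> 0 < absF x.
Proof.
move=> nz; rewrite lt_def absF_ge0 andbT; apply/eqP => /absF_eq0 h.
by rewrite h eqxx in nz.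
Qed.

Lemma absF1 : absF 1 = 1.
Proof.
have h := absFM 1 1; rewrite mulr1 in h.
have nz : absF 1 != 0 by apply/eqP => /absF_eq0 /eqP; rewrite oner_eq0.
by apply: (mulfI nz); rewrite mulr1 -h.
Qed.

Lemma absFN x : absF (- x) = absF x.
Proof.
have absFN1 : absF (-1) = 1.
  apply/eqP; rewrite -sqrp_eq1 ?absF_ge0 //.
  by rewrite expr2 -absFM mulrNN mulr1 absF1.
by rewrite -mulN1r absFM absFN1 mul1r.
Qed.

Lemma absFV x : absF (x^-1) = (absF x)^-1.
Proof.
have [->|nz] := eqVneq x 0; first by rewrite invr0 absF0 invr0.
have h := absFM x x^-1; rewrite divff // absF1 in h.
have nz' : absF x != 0 by rewrite gt_eqF ?absF_gt0.
by apply: (mulfI nz'); rewrite -h divff.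
Qed.

Lemma absF_disc x (k : int) :
  (q%:R : R) ^ k < absF x -> (q%:R : R) ^ k * q%:R <= absF x.
Proof.
have [->|nz] := eqVneq x 0.
  by rewrite absF0 ltNge ltW // exprz_gt0 ?q_gt0.
have [j ->] := absF_val nz; rewrite ltr_eXz2l ?q_gt1 // => kj.
rewrite -[X in _ * X]expr1z -expfzDr ?gt_eqF ?q_gt0 //.
by rewrite ler_eXz2l ?q_gt1 // lezD1.
Qed.

(* In particular |x| < q forces x to be an integer; chi kills such x. *)
Lemma absF_lt_q x : absF x < q%:R -> absF x <= 1.
Proof.
move=> hx; rewrite leNgt; apply/negP => /(@absF_disc x 0).
by rewrite expr0z mul1r leNgt hx.
Qed.

Variable n : nat.
Local Notation V := 'rV[F]_n.
Local Notation nv := (normv absF).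

Lemma normv_ge0 (v : V) : 0 <= nv v.
Proof. by rewrite /normv; elim/big_rec: _ => // i x _ h; rewrite le_max h orbT. Qed.

Lemma normv_coord (v : V) j : absF (v ord0 j) <= nv v.
Proof. exact: (le_bigmax 0 (fun i => absF (v ord0 i)) j). Qed.

Lemma normv_le (v : V) b : 0 <= b -> (forall j, absF (v ord0 j) <= b) -> nv v <= b.
Proof. by move=> b0 h; apply: bigmax_le. Qed.

Lemma normv_attained (v : V) : 0 < nv v -> exists j, nv v = absF (v ord0 j).
Proof.
rewrite /normv; elim/big_rec: _ => [|i x _ IH]; first by rewrite ltxx.
have [le_ix|lt_xi] := leP (absF (v ord0 i)) x; last by exists i.
by move=> x0; have [j ->] := IH x0; exists j.
Qed.

Lemma normv_eq0 (v : V) : nv v = 0 -> v = 0.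
Proof.
move=> h; apply/rowP => j; rewrite mxE; apply: absF_eq0.
by apply/le_anti; rewrite absF_ge0 // andbT -h normv_coord.
Qed.

Lemma normv_gt0 (v : V) : v != 0 -> 0 < nv v.
Proof.
move=> v0; rewrite lt_def normv_ge0 andbT; apply/eqP => /normv_eq0 h.
by rewrite h eqxx in v0.
Qed.

Lemma normv0 : nv (0 : V) = 0.
Proof.
apply/le_anti; rewrite normv_ge0 andbT; apply: normv_le => // j.
by rewrite mxE absF0.
Qed.

Lemma normvD (x y : V) : nv (x + y) <= Num.max (nv x) (nv y).
Proof.
apply: normv_le; first by rewrite le_max normv_ge0.
move=> j; rewrite mxE; apply: le_trans (absF_ultra _ _) _.
by rewrite ge_max !le_max !normv_coord /= orbT.
Qed.

Lemma normvN (x : V) : nv (- x) = nv x.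
Proof. by rewrite /normv; apply: eq_bigr => j _; rewrite mxE absFN. Qed.

Lemma normvB (x y : V) : nv (x - y) = nv (y - x).
Proof. by rewrite -normvN opprB. Qed.

Lemma normvZ c (x : V) : nv (c *: x) = absF c * nv x.
Proof.
rewrite /normv; apply: (big_rec2 (fun s t => s = absF c * t)); first by rewrite mulr0.
by move=> i a b _ ->; rewrite mxE absFM maxr_pMr // absF_ge0.
Qed.

(* Two closed balls of the same radius are disjoint or equal. *)
Lemma ball_trans (x y z : V) r : nv (x - y) <= r -> nv (y - z) <= r -> nv (x - z) <= r.
Proof.
move=> h1 h2; rewrite -(subrKA y); apply: le_trans (normvD _ _) _.
by rewrite ge_max h1 h2.
Qed.

Lemma ball_shift (x a c : V) r : nv a <= r -> (nv (x + a - c) <= r) = (nv (x - c) <= r).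
Proof.
move=> ha; apply/idP/idP => h.
  have -> : x - c = (x + a - c) + - a by rewrite addrAC addrK.
  by apply: le_trans (normvD _ _) _; rewrite ge_max h normvN.
rewrite addrAC; apply: le_trans (normvD _ _) _.
by rewrite ge_max h.
Qed.

Lemma dotvDr (a x y : V) : dotv a (x + y) = dotv a x + dotv a y.
Proof. by rewrite /dotv -big_split; apply: eq_bigr => j _; rewrite mxE mulrDr. Qed.

Lemma dotvZr (a x : V) c : dotv a (c *: x) = c * dotv a x.
Proof. by rewrite /dotv mulr_sumr; apply: eq_bigr => j _; rewrite mxE mulrCA. Qed.

Lemma dotvZl (a x : V) c : dotv (c *: a) x = c * dotv a x.
Proof. by rewrite /dotv mulr_sumr; apply: eq_bigr => j _; rewrite mxE mulrA. Qed.

Lemma dotv0r (a : V) : dotv a 0 = 0.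
Proof. by rewrite /dotv big1 // => j _; rewrite mxE mulr0. Qed.

Lemma dotv_delta (a : V) j : dotv a (delta_mx ord0 j) = a ord0 j.
Proof.
rewrite /dotv (bigD1 j) //= big1 ?addr0; first by rewrite mxE !eqxx mulr1.
by move=> k kj; rewrite mxE eqxx /= (negbTE kj) mulr0.
Qed.

Lemma dotv_le (a b : V) : absF (dotv a b) <= nv a * nv b.
Proof.
rewrite /dotv; apply: (big_rec (fun s => absF s <= nv a * nv b)).
  by rewrite absF0 // mulr_ge0 ?normv_ge0.
move=> i s _ h; apply: le_trans (absF_ultra _ _) _; rewrite ge_max h andbT.
by rewrite absFM ler_pM ?absF_ge0 ?normv_coord.
Qed.

(* A quadratic form y |-> L(y).y bounded by B on the unit sphere is bounded
   by B |y|^2: rescale y by a coordinate of maximal absolute value. *)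
Lemma quadratic_bound (L : {linear V -> V}) (B : R) (y : V) :
  (forall u, nv u = 1 -> absF (dotv (L u) u) <= B) -> y != 0 ->
  absF (dotv (L y) y) <= B * nv y ^+ 2.
Proof.
move=> hB y0; have [j hj] := normv_attained (normv_gt0 y0).
set c := y ord0 j in hj.
have c0 : c != 0 by apply/eqP => c0; move: (normv_gt0 y0); rewrite hj c0 absF0 ltxx.
pose u := c^-1 *: y.
have yE : y = c *: u by rewrite /u scalerA divff // scale1r.
have nu : nv u = 1 by rewrite /u normvZ hj absFV mulVf // gt_eqF ?absF_gt0.
rewrite {1 2}yE linearZ dotvZl dotvZr !absFM mulrA -expr2 hj mulrC.
by rewrite ler_pM2r ?exprn_gt0 ?absF_gt0 ?hB.
Qed.

(* The Taylor remainder is negligible on balls of radius q / (|lam| delta):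
   there |lam R(y).y| <= |lam| r^2 B < q, hence it is at most 1. *)
Lemma remainder_integral (lam : F) (L : {linear V -> V}) (B delta : R) (y : V) :
  (forall u, nv u = 1 -> absF (dotv (L u) u) <= B) -> 0 < delta ->
  (q%:R : R) * delta ^-2 * B < absF lam -> nv y <= q%:R * (absF lam * delta)^-1 ->
  absF (lam * dotv (L y) y) <= 1.
Proof.
move=> hB d0 hlam hy.
have [->|y0] := eqVneq y 0; first by rewrite dotv0r mulr0 absF0 ler01.
have hquad := quadratic_bound hB y0.
have t0 : 0 < nv y ^+ 2 by rewrite exprn_gt0 ?normv_gt0.
have B0 : 0 <= B by rewrite -(pmulr_lge0 _ t0) (le_trans (absF_ge0 _) hquad).
have l0 : 0 < absF lam.
  by apply: le_lt_trans hlam; rewrite !mulr_ge0 ?invr_ge0 ?exprn_ge0 ?(ltW d0) ?(ltW q_gt0).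
apply: absF_lt_q; rewrite absFM.
apply: (@le_lt_trans _ _ (absF lam * (B * (q%:R * (absF lam * delta)^-1) ^+ 2))).
  rewrite ler_pM2l //; apply: le_trans hquad _.
  by apply: ler_wpM2l => //; rewrite !expr2 ler_pM ?normv_ge0.
have -> : absF lam * (B * (q%:R * (absF lam * delta)^-1) ^+ 2)
        = q%:R * ((q%:R * delta ^-2 * B) / absF lam).
  by field; rewrite ?lt0r_neq0.
by rewrite gtr_pMr ?q_gt0 // ltr_pdivrMr // mul1r.
Qed.

Lemma dual_witness (c : F) (w : V) (delta : R) :
  c != 0 -> 0 < delta -> delta <= nv w ->
  exists a, nv a <= q%:R * (absF c * delta)^-1 /\ 1 < absF (c * dotv w a).
Proof.
move=> c0 d0 dw; have w0 : 0 < nv w := lt_le_trans d0 dw.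
have [j hj] := normv_attained w0.
have [pi hpi] := uniformizer.
have pi0 : pi != 0.
  by apply/eqP => pi0; move: q_gt0; rewrite -invr_gt0 -hpi pi0 absF0 ltxx.
set b := c * w ord0 j.
have b0 : b != 0.
  by apply: mulf_neq0 => //; apply/eqP => wj0; move: w0; rewrite hj wj0 absF0 ltxx.
exists ((b * pi)^-1 *: delta_mx ord0 j); split.
  rewrite normvZ; apply: (@le_trans _ _ (absF (b * pi)^-1 * 1)).
    apply: ler_wpM2l; first exact: absF_ge0.
    apply: normv_le => // k.
    by rewrite mxE; case: (_ && _); rewrite ?absF0 ?absF1.
  rewrite mulr1 absFV !absFM hpi -hj invfM invrK mulrC.
  rewrite ler_pM2l ?q_gt0 // lef_pV2 ?posrE ?mulr_gt0 ?absF_gt0 //.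
  by rewrite ler_pM2l ?absF_gt0.
rewrite dotvZr dotv_delta.
have -> : c * ((b * pi)^-1 * w ord0 j) = pi^-1.
  by rewrite mulrCA -/b invfM mulrAC mulVf ?mul1r.
by rewrite absFV hpi invrK q_gt1.
Qed.

Lemma radius_le (x : F) (m : int) :
  (q%:R : R) ^ m < absF x -> q%:R * (absF x)^-1 <= (q%:R : R) ^ (- m).
Proof.
move=> hx; have x0 : 0 < absF x by apply: le_lt_trans hx; rewrite ltW ?exprz_gt0 ?q_gt0.
rewrite -invr_expz ler_pdivrMr // ler_pdivlMl ?exprz_gt0 ?q_gt0 //.
exact: absF_disc.
Qed.

Lemma decomp_ball (C : Type) (U : set V) (phi : V -> C) (m : int) (rho : R) :
  ball_decomp absF q U phi m -> rho <= (q%:R : R) ^ (- m) ->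
  forall c x, U c -> nv (x - c) <= rho -> U x /\ phi x = phi c.
Proof.
move=> [s [hs [_ hconst]]] hrho c x Uc hxc.
have [c0 c0s hc0] := (hs c).1 Uc.
have hx0 : nv (x - c0) <= (q%:R : R) ^ (- m) by apply: ball_trans (le_trans hxc hrho) hc0.
by split; [apply/(hs x); exists c0 | exact: hconst hx0 hc0].
Qed.

End ValuedSpace.

Section VanishingCriterion.
Variables (R : realType) (F : fieldType) (absF : F -> R) (q : nat).
Hypothesis hF : nonarch_local_field absF q.
Variable n : nat.
Local Notation V := 'rV[F]_n.
Local Notation nv := (normv absF).
Variables (chi : F -> R[i]) (I : (V -> R[i]) -> R[i]).
Hypothesis hchi : char_ker_oF absF chi.
Hypothesis hI : haar_integral absF I.

Lemma chiD x y : chi (x + y) = chi x * chi y.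
Proof. by case: hchi. Qed.

Lemma chi_small x : absF x <= 1 -> chi x = 1.
Proof. by case: hchi => _ [_ h] /h. Qed.

Lemma chi_big x : 1 < absF x -> chi x != 1.
Proof. by case: hchi => _ [_ h] hx; apply/eqP => /h; rewrite leNgt hx. Qed.

Lemma I_lin (u v : V -> R[i]) a : schwartz_on absF setT u -> schwartz_on absF setT v ->
  I (fun x => u x + a * v x) = I u + a * I v.
Proof. by case: hI => h _ _ _; apply: h. Qed.

Lemma I_trans (u : V -> R[i]) a : schwartz_on absF setT u -> I (fun x => u (x + a)) = I u.
Proof. by case: hI => _ h _ _; apply: h. Qed.

Lemma schwartz0 : schwartz_on absF setT (fun _ : V => 0 : R[i]).
Proof.
split; first by move=> x _; exists 1; split.
by exists set0; split => //; split => // J O _ _; exists [::].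
Qed.

Lemma I0 : I (fun _ => 0) = 0.
Proof.
have := I_lin 1 schwartz0 schwartz0; rewrite mul1r.
under eq_fun do rewrite addr0.
by move=> hlin; apply: (addrI (I (fun _ => 0))); rewrite addr0 [RHS]hlin mul1r.
Qed.

Lemma IZ (u : V -> R[i]) a : schwartz_on absF setT u -> I (fun x => a * u x) = a * I u.
Proof.
move=> hu; have := I_lin a schwartz0 hu.
by under eq_fun do rewrite add0r; rewrite I0 add0r.
Qed.

Variables (U : set V) (g : V -> V) (h : V -> R[i]) (lam : F) (r : R).
Hypothesis hUc : compactV absF U.
Hypothesis hr : 0 < r.
Hypothesis hballU : forall c x, U c -> nv (x - c) <= r -> U x.
Hypothesis hloc : forall c x, U c -> nv (x - c) <= r ->
  h x = h c * chi (lam * dotv (g c) (x - c)).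
Hypothesis hgrad : forall c, U c -> exists a, nv a <= r /\ 1 < absF (lam * dotv (g c) a).

(* The linear character chi(lam w.(.)) is constant at scale char_radius w. *)
Definition char_radius (w : V) : R := (absF lam * nv w + 1)^-1.

Lemma char_radius_gt0 w : 0 < char_radius w.
Proof.
rewrite invr_gt0; apply: ltr_wpDl ltr01.
by apply: mulr_ge0; [exact: (absF_ge0 hF) | exact: normv_ge0].
Qed.

Lemma chi_near (w x y : V) : nv (y - x) < char_radius w -> chi (lam * dotv w (y - x)) = 1.
Proof.
move=> hyx; apply: chi_small; rewrite (absFM hF).
have lw0 : 0 <= absF lam * nv w by rewrite mulr_ge0 ?(absF_ge0 hF) ?normv_ge0.
apply: (@le_trans _ _ (absF lam * (nv w * nv (y - x)))).
  by rewrite ler_wpM2l ?(absF_ge0 hF) ?(dotv_le hF).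
rewrite mulrA; apply: (@le_trans _ _ (absF lam * nv w * char_radius w)).
  by rewrite ler_wpM2l // ltW.
by rewrite /char_radius ler_pdivrMr ?mul1r ?lerDl // (ltr_wpDl lw0 ltr01).
Qed.

Definition cutoff (s : seq V) : V -> R[i] :=
  fun x => if has (fun c => nv (x - c) <= r) s then h x else 0.

Lemma cutoff_schwartz s : (forall c, c \in s -> U c) -> schwartz_on absF setT (cutoff s).
Proof.
move=> hs; split; last first.
  exists U; split => //; split => // x _ nUx; rewrite /cutoff.
  by case: hasP => // -[c cs hc]; exfalso; apply: nUx; exact: hballU (hs c cs) hc.
move=> x _; rewrite /cutoff; case: hasP => [[c cs hc]|hn].
  exists (Num.min r (char_radius (g c))); split; first by rewrite lt_min hr char_radius_gt0.
  move=> y; rewrite lt_min => /andP[h1 h2]; split => //.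
  have hyc : nv (y - c) <= r by apply: (ball_trans hF) hc; exact: ltW.
  case: hasP => [_|[]]; last by exists c.
  rewrite (hloc (hs c cs) hyc) (hloc (hs c cs) hc) -(subrKA x) dotvDr.
  by rewrite mulrDr chiD chi_near // mul1r.
exists r; split => // y hy; split => //.
case: hasP => // -[c cs hc]; exfalso; apply: hn; exists c => //.
by apply: (ball_trans hF) hc; rewrite (normvB hF) ltW.
Qed.

(* Translation by a short vector a with chi(lam g(c).a) <> 1 multiplies the
   integral over the ball around c by chi(lam g(c).a): it must vanish. *)
Lemma cutoff_ball_vanish c : U c -> I (cutoff [:: c]) = 0.
Proof.
move=> Uc; have [a [ha ga]] := hgrad Uc.
set k := chi (lam * dotv (g c) a).
have sch : schwartz_on absF setT (cutoff [:: c]).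
  by apply: cutoff_schwartz => c'; rewrite inE => /eqP ->.
have shift : (fun x => cutoff [:: c] (x + a)) = (fun x => k * cutoff [:: c] x).
  apply: funext => x; rewrite /cutoff /= !orbF (ball_shift hF _ _ ha).
  case: ifP => hx; last by rewrite mulr0.
  rewrite (hloc Uc hx) (hloc Uc (_ : nv (x + a - c) <= r)) ?(ball_shift hF) //.
  by rewrite (addrAC x) dotvDr mulrDr chiD /k mulrA mulrC.
have := I_trans a sch; rewrite shift IZ // => /eqP.
rewrite -subr_eq0 -{2}(mul1r (I _)) -mulrBl mulf_eq0 => /orP[|/eqP //].
by rewrite subr_eq0 => /eqP hk; exfalso; move: (chi_big ga); rewrite -/k hk eqxx.
Qed.

(* Integral over a finite union of r-balls: peel off the first ball, which
   is either contained in the union of the others or disjoint from it. *)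
Lemma cutoff_vanish s : (forall c, c \in s -> U c) -> I (cutoff s) = 0.
Proof.
elim: s => [_|c s IH hs].
  have -> : cutoff [::] = fun _ => 0 by apply: funext.
  exact: I0.
have hs' : forall c', c' \in s -> U c' by move=> c' hc'; apply: hs; rewrite inE hc' orbT.
have Uc : U c by apply: hs; rewrite inE eqxx.
case: (boolP (has (fun c' => nv (c - c') <= r) s)) => [/hasP [c' cs hc]|hn].
  have -> : cutoff (c :: s) = cutoff s; last exact: IH.
  apply: funext => x; rewrite /cutoff /=; case: (boolP (nv (x - c) <= r)) => hx //=.
  by case: hasP => // -[]; exists c' => //; apply: (ball_trans hF) hx hc.
have -> : cutoff (c :: s) = fun x => cutoff [:: c] x + 1 * cutoff s x.
  apply: funext => x; rewrite /cutoff /= orbF mul1r.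
  case: (boolP (nv (x - c) <= r)) => hx /=; last by case: hasP => _; rewrite add0r.
  case: hasP => [[c' cs hc]|_]; last by rewrite addr0.
  by exfalso; move/hasP: hn; apply; exists c' => //; apply: (ball_trans hF) hc; rewrite (normvB hF).
have hc : forall c', c' \in [:: c] -> U c' by move=> c'; rewrite inE => /eqP ->.
rewrite I_lin; try exact: cutoff_schwartz.
by rewrite cutoff_ball_vanish // IH // mulr0 addr0.
Qed.

Lemma ball_cover : exists s : seq V, (forall c, c \in s -> U c) /\
  forall x, U x -> has (fun c => nv (x - c) <= r) s.
Proof.
pose O := fun c x => U c /\ nv (x - c) <= r.
have hOo : forall c, openV absF (O c).
  move=> c x [Uc hx]; exists r; split => // y hy; split => //.
  by apply: (ball_trans hF) hx; exact: ltW.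
have [s0 hs0] : exists s0 : seq V, U `<=` (fun x => exists2 c, List.In c s0 & O c x).
  apply: hUc => // x Ux; exists x; split => //; rewrite subrr (normv0 hF); exact: ltW.
exists [seq c <- s0 | `[< U c >]]; split.
  by move=> c; rewrite mem_filter => /andP[/asboolP].
move=> x /hs0 [c]; elim: s0 {hs0} => // a s0 IH /= [<-|cs] [Uc hc].
  by rewrite (asboolT Uc) /= hc.
by case: ifP => _ //=; rewrite IH ?orbT.
Qed.

Theorem locally_linear_phase_vanish : I (fun x => if `[< U x >] then h x else 0) = 0.
Proof.
have [s [sU scover]] := ball_cover.
suff -> : (fun x => if `[< U x >] then h x else 0) = cutoff s by exact: cutoff_vanish.
apply: funext => x; rewrite /cutoff; case: asboolP => [/scover -> //|Ux].
by case: hasP => // -[c cs hc]; exfalso; apply: Ux; exact: hballU (sU c cs) hc.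
Qed.

End VanishingCriterion.

Unset Implicit Arguments.

Theorem mainTheorem18 (R : realType) (F : fieldType) (absF : F -> R) (q : nat)
  (hF : nonarch_local_field absF q)
  (chi : F -> R[i]) (hchi : char_ker_oF absF chi)
  (n : nat) (I : ('rV[F]_n -> R[i]) -> R[i]) (hI : haar_integral absF I)
  (U : set 'rV[F]_n) (hUo : openV absF U) (hUc : compactV absF U)
  (f : 'rV[F]_n -> F) (f' : 'rV[F]_n -> 'rV[F]_n)
  (Rm : 'rV[F]_n -> 'rV[F]_n -> {linear 'rV[F]_n -> 'rV[F]_n})
  (htaylor : forall x0 x, U x0 -> U (x0 + x) ->
     f (x0 + x) = f x0 + dotv (f' x0) x + dotv (Rm x0 x x) x)
  (B : R)
  (hBub : forall x0 x y, U x0 -> U (x0 + x) -> normv absF y = 1 ->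
     absF (dotv (Rm x0 x y) y) <= B)
  (hBlub : forall B' : R, (forall x0 x y, U x0 -> U (x0 + x) -> normv absF y = 1 ->
     absF (dotv (Rm x0 x y) y) <= B') -> B <= B')
  (delta : R)
  (hdelta_min : (exists2 x0, U x0 & normv absF (f' x0) = delta) /\
                forall x0, U x0 -> delta <= normv absF (f' x0))
  (hdelta : 0 < delta)
  (phi : 'rV[F]_n -> R[i]) (hphi : schwartz_on absF U phi)
  (m0 : int) (hm0 : ball_decomp absF q U phi m0)
  (hm0min : forall m : int, ball_decomp absF q U phi m -> m0 <= m) :
  forall lam : F, lam != 0 ->
    Num.max ((q%:R : R) * delta ^-2 * B) (delta^-1 * (q%:R : R) ^ m0) < absF lam ->
    I (fun x => if `[< U x >] then chi (lam * f x) * phi x else 0) = 0.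
Proof.
move=> lam lam0; rewrite gt_max => /andP[hlamB hlamm].
have [[x0 Ux0 hx0] hmin] := hdelta_min.
pose r := (q%:R : R) * (absF lam * delta)^-1.
have hr : 0 < r by rewrite mulr_gt0 ?(q_gt0 hF) // invr_gt0 mulr_gt0 ?(absF_gt0 hF).
(* |lam| delta is the absolute value |lam f'(x0)_j|, so r <= q^-m0 *)
have [j hj] : exists j, normv absF (f' x0) = absF (f' x0 ord0 j).
  by apply: normv_attained; rewrite hx0.
have hval : absF (lam * f' x0 ord0 j) = absF lam * delta by rewrite (absFM hF) -hj hx0.
have rle : r <= (q%:R : R) ^ (- m0).
  rewrite /r -hval; apply: (radius_le hF); rewrite hval.
  by move: hlamm; rewrite ltr_pdivrMl // mulrC.
have hball := decomp_ball hF hm0 rle.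
apply: (locally_linear_phase_vanish hF hchi hI hUc hr (g := f')).
- by move=> c x Uc /(hball _ _ Uc) [].
- (* Taylor: the remainder has absolute value <= 1, so chi ignores it *)
  move=> c x Uc hxc; have [Ux ->] := hball _ _ Uc hxc.
  have Ucx : U (c + (x - c)) by rewrite addrC subrK.
  have hrem := remainder_integral hF (fun u => hBub c (x - c) u Uc Ucx) hdelta hlamB hxc.
  have := htaylor _ _ Uc Ucx; rewrite addrC subrK => ->.
  by rewrite !mulrDr !(chiD hchi) (chi_small hchi hrem) mulr1 mulrAC.
- by move=> c Uc; apply: (dual_witness hF) (hmin c Uc).
Qed.
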